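(* Let $R$ be a ring. Then $R$ is feckly clean if and only if for any two distinct maximal ideals $M$ and $N$ of $R$ there exists $e\in R$ such that $e\in M$, $1-e\in N$ and $eR(1-e)\subseteq J(R)$.
   Context: Rings are associative with identity, not necessarily commutative; $J(R)$ is the Jacobson radical; maximal ideals are two-sided. An element $u\in R$ is full if $RuR=R$. An element $a\in R$ is feckly clean if there exist $e\in R$ and a full element $u\in R$ with $a=e+u$ and $eR(1-e)\subseteq J(R)$; $R$ is feckly clean if every element is feckly clean. *)

From HB Require Import structures.
From mathcomp Require Import all_boot all_order all_algebra.
Set Implicit Arguments. Unset Strict Implicit. Unset Printing Implicit Defensive.
Import GRing.Theory.
Local Open Scope ring_scope.

Definition left_ideal (R : pzRingType) (I : R -> Prop) : Prop :=
  I 0 /\ (forall x y, I x -> I y -> I (x + y)) /\ (forall x, I x -> I (- x)) /\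
  (forall r x, I x -> I (r * x)).

Definition ideal (R : pzRingType) (I : R -> Prop) : Prop :=
  left_ideal I /\ (forall x r, I x -> I (x * r)).

Definition proper (R : pzRingType) (I : R -> Prop) : Prop := exists x, ~ I x.

Definition maximal_left_ideal (R : pzRingType) (M : R -> Prop) : Prop :=
  left_ideal M /\ proper M /\
  forall I : R -> Prop, left_ideal I -> proper I -> (forall x, M x -> I x) ->
    forall x, I x -> M x.

Definition maximal_ideal (R : pzRingType) (M : R -> Prop) : Prop :=
  ideal M /\ proper M /\
  forall I : R -> Prop, ideal I -> proper I -> (forall x, M x -> I x) ->
    forall x, I x -> M x.

Definition jacobson (R : pzRingType) (x : R) : Prop :=
  forall M : R -> Prop, maximal_left_ideal M -> M x.

(* RuR : the two-sided ideal generated by u (finite sums of a u b). *)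
Definition RuR (R : pzRingType) (u x : R) : Prop :=
  exists s : seq (R * R), x = \sum_(p <- s) (p.1 * u * p.2).

Definition full (R : pzRingType) (u : R) : Prop := forall x : R, RuR u x.

Definition eR1e_in_J (R : pzRingType) (e : R) : Prop :=
  forall r : R, jacobson (e * r * (1 - e)).

Definition feckly_clean_elt (R : pzRingType) (a : R) : Prop :=
  exists e u : R, a = e + u /\ full u /\ eR1e_in_J e.

Definition feckly_clean (R : pzRingType) : Prop :=
  forall a : R, feckly_clean_elt a.

From Pilot Require Import Defs.
From HB Require Import structures.
From mathcomp Require Import all_boot all_order all_algebra.
From mathcomp Require Import boolp classical_sets.
Import GRing.Theory.
Local Open Scope classical_set_scope.
Local Open Scope ring_scope.

(* An element e with eR(1 - e) in J(R) behaves like an idempotent modulo every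
   maximal ideal M: since maximal ideals are prime and contain J(R), M contains
   exactly one of e and 1 - e.  Such elements therefore cut the maximal spectrum
   into complementary clopen pieces, and they are closed under complement and
   product, hence under finite joins.
   If R is feckly clean and M <> N, write n = e + u with n in N, m + n = 1 with
   m in M, and u full: then u lies in neither M nor N, which forces e in M and
   1 - e in N.
   Conversely, if such pieces separate any two maximal ideals, compactness of the
   maximal spectrum (Krull's lemma applied to a suitable ideal of "covered"
   elements) separates first a point from the closed set of maximal ideals
   containing a, then the two disjoint closed sets of maximal ideals containing a
   and 1 - a.  The resulting e leaves a - e in no maximal ideal, so a - e is full. *)

Lemma ex_maximal_superset (T : Type) (P : set (set T)) (X0 : set T) : P X0 ->
  (forall F : set (set T), F !=set0 -> F `<=` P -> total_on F subset ->
     P (\bigcup_(X in F) X)) ->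
  exists A, [/\ P A, X0 `<=` A & forall B, P B -> A `<=` B -> B `<=` A].
Proof.
move=> PX0 Pchain; pose S := {X : set T | P X /\ X0 `<=` X}.
pose S0 : S := exist _ X0 (conj PX0 (@subset_refl _ X0)).
have [|||[A [PA X0A]] Amax] := @ZL_preorder S S0 (fun X Y => `[< sval X `<=` sval Y >]).
- by move=> X; apply/asboolP.
- by move=> X Y Z /asboolP XY /asboolP YZ; apply/asboolP; apply: subset_trans YZ.
- move=> C Ctot; have [[X1 CX1]|C0] := pselect (exists X, C X); last first.
    by exists S0 => X CX; case: C0; exists X.
  have PF : P (\bigcup_(X in sval @` C) X).
    apply: Pchain; first by exists (sval X1); exists X1.
      by move=> _ [X _ <-]; case: (svalP X).
    move=> _ _ [X CX <-] [Y CY <-].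
    by case: (Ctot X Y CX CY) => /asboolP; [left|right].
  have X0F : X0 `<=` \bigcup_(X in sval @` C) X.
    by move=> t X0t; exists (sval X1); [exists X1|case: (svalP X1) => _; apply].
  exists (exist _ (\bigcup_(X in sval @` C) X) (conj PF X0F)) => X CX; apply/asboolP => t Xt.
  by exists (sval X); first exists X.
exists A; split => // B PB AB.
have X0B : X0 `<=` B by apply: subset_trans AB.
by have /asboolP := Amax (exist _ B (conj PB X0B)) (asboolT AB).
Qed.

Section Ideals.
Context {R : pzRingType}.
Implicit Types (x y r s : R) (I K L M : set R).

Lemma left_ideal_intro {I} : I 0 -> (forall x y, I x -> I y -> I (x + y)) ->
  (forall r x, I x -> I (r * x)) -> left_ideal I.
Proof.
by move=> I0 ID IM; split; [|split; [|split]] => // x Ix; rewrite -mulN1r; apply: IM.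
Qed.

Lemma ideal_intro {I} : I 0 -> (forall x y, I x -> I y -> I (x + y)) ->
  (forall r x, I x -> I (r * x)) -> (forall x r, I x -> I (x * r)) -> ideal I.
Proof. by move=> I0 ID IMl IMr; split => //; apply: left_ideal_intro. Qed.

Section LeftIdeal.
Context {I : set R} (HI : left_ideal I).

Lemma left_ideal0 : I 0.
Proof. by case: HI. Qed.
Lemma left_idealD {x y} : I x -> I y -> I (x + y).
Proof. by case: HI => _ [ID _]; apply: ID. Qed.
Lemma left_idealN {x} : I x -> I (- x).
Proof. by case: HI => _ [_ [IN _]]; apply: IN. Qed.
Lemma left_idealMl {r x} : I x -> I (r * x).
Proof. by case: HI => _ [_ [_ IM]]; apply: IM. Qed.
Lemma left_idealB {x y} : I x -> I y -> I (x - y).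
Proof. by move=> Ix Iy; apply: left_idealD => //; apply: left_idealN. Qed.

Lemma left_ideal_1 : I 1 -> I = setT.
Proof.
by move=> I1; apply/seteqP; split=> [x _ //|x _]; rewrite -[x]mulr1; apply: left_idealMl.
Qed.

Lemma left_ideal_proper : Defs.proper I <-> ~ I 1.
Proof.
split=> [[x nIx] I1|nI1]; last by exists 1.
by apply: nIx; rewrite (left_ideal_1 I1).
Qed.

Lemma left_ideal_compl {x} : Defs.proper I -> I x -> ~ I (1 - x).
Proof.
by move=> /left_ideal_proper nI1 Ix I1x; apply: nI1; rewrite -(subrK x 1); apply: left_idealD.
Qed.

End LeftIdeal.

Lemma idealMr {I x r} : ideal I -> I x -> I (x * r).
Proof. by case=> _; apply. Qed.

Lemma idealMl {I r x} : ideal I -> I x -> I (r * x).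
Proof. by case=> HI _; apply: left_idealMl. Qed.

Lemma ideal_setT : ideal (@setT R).
Proof. exact: ideal_intro. Qed.

Lemma left_ideal_add {I K} : left_ideal I -> left_ideal K ->
  left_ideal [set i + k | i in I & k in K].
Proof.
move=> HI HK; apply: left_ideal_intro.
- by exists 0; [apply: left_ideal0|exists 0; [apply: left_ideal0|rewrite addr0]].
- move=> _ _ [i Ii [k Kk <-]] [i' Ii' [k' Kk' <-]].
  exists (i + i'); first exact: left_idealD.
  by exists (k + k'); [apply: left_idealD|rewrite addrACA].
- move=> r _ [i Ii [k Kk <-]].
  exists (r * i); first exact: left_idealMl.
  by exists (r * k); [apply: left_idealMl|rewrite mulrDr].
Qed.

Lemma ideal_add {I K} : ideal I -> ideal K -> ideal [set i + k | i in I & k in K].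
Proof.
move=> HI HK; split; first exact: left_ideal_add HI.1 HK.1.
move=> _ r [i Ii [k Kk <-]].
by exists (i * r); [apply: idealMr|exists (k * r); [apply: idealMr|rewrite mulrDl]].
Qed.

Lemma left_ideal_mulr {I} r : left_ideal I -> left_ideal [set s * r | s in I].
Proof.
move=> HI; apply: left_ideal_intro.
- by exists 0; [apply: left_ideal0|rewrite mul0r].
- by move=> _ _ [s Is <-] [s' Is' <-]; exists (s + s'); [apply: left_idealD|rewrite mulrDl].
- by move=> t _ [s Is <-]; exists (t * s); [apply: left_idealMl|rewrite mulrA].
Qed.

Lemma maximal_left_idealP {M I} : maximal_left_ideal M -> left_ideal I -> M `<=` I ->
  I 1 \/ I `<=` M.
Proof.
move=> [_ [_ Mmax]] HI MI; have [|nI1] := pselect (I 1); first by left.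
by right; apply: Mmax => //; apply/left_ideal_proper.
Qed.

Lemma maximal_idealP {M I} : maximal_ideal M -> ideal I -> M `<=` I -> I 1 \/ I `<=` M.
Proof.
move=> [_ [_ Mmax]] HI MI; have [|nI1] := pselect (I 1); first by left.
by right; apply: Mmax => //; apply/(left_ideal_proper HI.1).
Qed.

Section Chains.
Variables (F : set (set R)) (F0 : F !=set0) (Ftot : total_on F subset).

Let bigcup_chain_closed (op : R -> R -> R) :
  (forall X, F X -> forall x y, X x -> X y -> X (op x y)) ->
  forall x y, (\bigcup_(X in F) X) x -> (\bigcup_(X in F) X) y ->
    (\bigcup_(X in F) X) (op x y).
Proof.
move=> opF x y [X FX Xx] [Y FY Yy].
by case: (Ftot _ _ FX FY) => [XY|YX];
  [exists Y => //; apply: opF (XY _ Xx) Yy|exists X => //; apply: opF Xx (YX _ Yy)].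
Qed.

Lemma left_ideal_bigcup : F `<=` @left_ideal R -> left_ideal (\bigcup_(X in F) X).
Proof.
move=> FI; have [X0 FX0] := F0; apply: left_ideal_intro.
- by exists X0 => //; apply: left_ideal0 (FI _ FX0).
- by apply: bigcup_chain_closed => X FX; apply: left_idealD (FI _ FX).
- by move=> r x [X FX Xx]; exists X => //; exact: (left_idealMl (FI _ FX)).
Qed.

Lemma ideal_bigcup : F `<=` @ideal R -> ideal (\bigcup_(X in F) X).
Proof.
move=> FI; split; first by apply: left_ideal_bigcup => X /FI [].
by move=> x r [X FX Xx]; exists X => //; apply: idealMr (FI _ FX) _.
Qed.

End Chains.

Lemma ex_maximal_left_ideal {I} : left_ideal I -> ~ I 1 ->
  exists2 L, maximal_left_ideal L & I `<=` L.
Proof.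
move=> HI nI1.
have [F F0 FP Ftot|L [[HL nL1] IL Lmax]] :=
  @ex_maximal_superset R (fun X => left_ideal X /\ ~ X 1) I (conj HI nI1).
  split; first by apply: left_ideal_bigcup => // X /FP [].
  by move=> [X /FP [_ nX1]].
exists L => //; split => //; split; first exact/left_ideal_proper.
by move=> K HK /(left_ideal_proper HK) nK1; apply: Lmax.
Qed.

Lemma ex_maximal_ideal {I} : ideal I -> ~ I 1 -> exists2 M, maximal_ideal M & I `<=` M.
Proof.
move=> HI nI1.
have [F F0 FP Ftot|M [[HM nM1] IM Mmax]] :=
  @ex_maximal_superset R (fun X => ideal X /\ ~ X 1) I (conj HI nI1).
  split; first by apply: ideal_bigcup => // X /FP [].
  by move=> [X /FP [_ nX1]].
exists M => //; split => //; split; first exact/(left_ideal_proper HM.1).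
by move=> K HK /(left_ideal_proper HK.1) nK1; apply: Mmax.
Qed.

End Ideals.

Section Jacobson.
Context {R : pzRingType}.
Implicit Types (x y r s : R) (I L M : set R).

Lemma left_ideal_jacobson : left_ideal (@jacobson R).
Proof.
apply: left_ideal_intro => [L [HL _]|x y Jx Jy L HL|r x Jx L HL].
- exact: left_ideal0.
- exact: (left_idealD HL.1 (Jx L HL) (Jy L HL)).
- exact: (left_idealMl HL.1 (Jx L HL)).
Qed.

Lemma maximal_left_ideal_colon {L r} : maximal_left_ideal L -> ~ L r ->
  maximal_left_ideal [set s | L (s * r)].
Proof.
move=> maxL nLr; have [HL _] := maxL.
have HLr : left_ideal [set s | L (s * r)].
  apply: left_ideal_intro => [|s t|t s] /=; first by rewrite mul0r; apply: left_ideal0.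
    by rewrite mulrDl; apply: left_idealD.
  by rewrite -mulrA; apply: left_idealMl.
split=> //; split=> [|I HI /(left_ideal_proper HI) nI1 LrI].
  by exists 1; rewrite /= mul1r.
have LK : L `<=` [set i + l | i in [set s * r | s in I] & l in L].
  move=> l Ll; exists 0; last by exists l; rewrite ?add0r.
  by exists 0; [apply: left_ideal0|rewrite mul0r].
have [[_ [s Is <-] [l Ll def1]]|KL] :=
  maximal_left_idealP maxL (left_ideal_add (left_ideal_mulr r HI) HL) LK.
  exfalso; apply: nI1; rewrite -(subrK (r * s) 1).
  apply: (left_idealD HI); last exact: (left_idealMl HI).
  (* [(1 - r s) r = r l] since [s r = 1 - l] *)
  apply: LrI => /=; rewrite mulrBl mul1r -mulrA.
  have -> : s * r = 1 - l by rewrite -def1 addrK.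
  by rewrite mulrBr mulr1 subKr; apply: (left_idealMl HL).
move=> z Iz; apply: KL; exists (z * r); first by exists z.
by exists 0; [apply: left_ideal0|rewrite addr0].
Qed.

Lemma jacobsonMr {x} r : jacobson x -> jacobson (x * r).
Proof.
move=> Jx L maxL; have [HL _] := maxL.
have [Lr|nLr] := pselect (L r); first exact: (left_idealMl HL).
exact: Jx _ (maximal_left_ideal_colon maxL nLr).
Qed.

Lemma ideal_jacobson : ideal (@jacobson R).
Proof. by split; [exact: left_ideal_jacobson|move=> x r; apply: jacobsonMr]. Qed.

Lemma jacobson_sandwich y : (forall s, jacobson (y * s * y)) -> jacobson y.
Proof.
move=> Jy L maxL; have [HL _] := maxL.
have HK := left_ideal_add HL (left_ideal_mulr y ideal_setT.1).
have LK : L `<=` [set l + i | l in L & i in [set s * y | s in setT]].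
  by move=> l Ll; exists l => //; exists 0; [exists 0; rewrite ?mul0r|rewrite addr0].
have [[l Ll [_ [s _ <-] def1]]|KL] := maximal_left_idealP maxL HK LK.
  rewrite -[y]mulr1 -def1 mulrDr mulrA.
  exact: (left_idealD HL (left_idealMl HL Ll) (Jy s L maxL)).
apply: KL; exists 0; first exact: left_ideal0.
by exists y; [exists 1; rewrite ?mul1r|rewrite add0r].
Qed.

Lemma jacobson_sub_maximal_ideal {M} : maximal_ideal M -> @jacobson R `<=` M.
Proof.
move=> maxM x Jx; have [HM [/(left_ideal_proper HM.1) nM1 _]] := maxM.
have MK : M `<=` [set m + j | m in M & j in @jacobson R].
  move=> m Mm; exists m => //; exists 0; last by rewrite addr0.
  exact: left_ideal0 left_ideal_jacobson.
have [[m Mm [j Jj def1]]|KM] := maximal_idealP maxM (ideal_add HM ideal_jacobson) MK.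
  have [L maxL ML] := ex_maximal_left_ideal HM.1 nM1; have [HL [Lpr _]] := maxL.
  case/(left_ideal_proper HL): Lpr; rewrite -def1.
  exact: (left_idealD HL (ML _ Mm) (Jj L maxL)).
by apply: KM; exists 0; [exact: left_ideal0 HM.1|exists x; rewrite ?add0r].
Qed.

Lemma maximal_ideal_prime {M x y} : maximal_ideal M -> (forall r, M (x * r * y)) ->
  M x \/ M y.
Proof.
move=> maxM Mxy; have [HM _] := maxM.
have HI : ideal [set z | forall r, M (x * r * z)].
  apply: ideal_intro => [r|z z' Mz Mz' r|s z Mz r|z s Mz r] /=.
  - by rewrite mulr0; apply: left_ideal0 HM.1.
  - by rewrite mulrDr; apply: (left_idealD HM.1).
  - by rewrite mulrA -(mulrA x); apply: Mz.
  - by rewrite mulrA; apply: idealMr.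
have MI : M `<=` [set z | forall r, M (x * r * z)] by move=> z Mz r; apply: idealMl.
have [/(_ 1)|IM] := maximal_idealP maxM HI MI; first by rewrite !mulr1; left.
by right; apply: IM.
Qed.

End Jacobson.

Section SplittingElements.
Context {R : pzRingType}.
Implicit Types (e f g h r s u x : R) (M : set R).

Lemma eR1e_in_J0 : eR1e_in_J (0 : R).
Proof. by move=> r; rewrite !mul0r; apply: left_ideal0 left_ideal_jacobson. Qed.

Lemma eR1e_in_JM e f : eR1e_in_J e -> eR1e_in_J f -> eR1e_in_J (e * f).
Proof.
move=> Je Jf r; have -> : 1 - e * f = (1 - e) + e * (1 - f).
  by rewrite mulrBr mulr1 addrA subrK.
have -> : e * f * r * ((1 - e) + e * (1 - f)) =
    e * (f * r) * (1 - e) + e * (f * (r * e) * (1 - f)) by rewrite mulrDr !mulrA.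
exact: (left_idealD left_ideal_jacobson (Je _) (left_idealMl left_ideal_jacobson (Jf _))).
Qed.

Lemma eR1e_in_J_compl e : eR1e_in_J e -> eR1e_in_J (1 - e).
Proof.
move=> Je r; rewrite subKr; apply: jacobson_sandwich => s.
have -> : (1 - e) * r * e * s * ((1 - e) * r * e) =
    (1 - e) * r * (e * s * (1 - e)) * (r * e) by rewrite !mulrA.
by apply: jacobsonMr; apply: (left_idealMl left_ideal_jacobson).
Qed.

(* For idempotents this is the join [e + f - e f] of the Boolean algebra of idempotents. *)
Definition ejoin e f := 1 - (1 - e) * (1 - f).

Lemma ejoinE e f : ejoin e f = e + (1 - e) * f.
Proof. by rewrite /ejoin mulrBr mulr1 opprB addrCA subKr addrC. Qed.

Lemma eR1e_in_J_join e f : eR1e_in_J e -> eR1e_in_J f -> eR1e_in_J (ejoin e f).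
Proof. by move=> Je Jf; apply: eR1e_in_J_compl; apply: eR1e_in_JM; apply: eR1e_in_J_compl. Qed.

Lemma maximal_ideal_split {M e} : maximal_ideal M -> eR1e_in_J e -> M e \/ M (1 - e).
Proof.
move=> maxM Je; apply: (maximal_ideal_prime maxM) => r.
exact: (jacobson_sub_maximal_ideal maxM).
Qed.

Lemma maximal_ideal_ejoin {M e f} : maximal_ideal M -> eR1e_in_J e -> eR1e_in_J f ->
  M (ejoin e f) <-> M e /\ M f.
Proof.
move=> maxM Je Jf; have [HM [Mpr _]] := maxM.
have M1 : M ((1 - e) * (1 - f)) -> ~ M (1 - (1 - e) * (1 - f)).
  exact: (left_ideal_compl HM.1 Mpr).
split=> [Mef|[Me Mf]]; last first.
  by rewrite ejoinE; apply: (left_idealD HM.1 Me); apply: idealMl.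
split.
  have [//|M1e] := maximal_ideal_split maxM Je.
  by exfalso; apply: M1 Mef; apply: idealMr.
have [//|M1f] := maximal_ideal_split maxM Jf.
by exfalso; apply: M1 Mef; apply: idealMl.
Qed.

End SplittingElements.

Section Full.
Context {R : pzRingType}.
Implicit Types (u x : R) (M : set R).

Lemma ideal_RuR u : ideal (RuR u).
Proof.
apply: ideal_intro => [|_ _ [s ->] [t ->]|r _ [s ->]|_ r [s ->]].
- by exists [::]; rewrite big_nil.
- by exists (s ++ t); rewrite big_cat.
- exists [seq (r * p.1, p.2) | p <- s]; rewrite big_map mulr_sumr.
  by apply: eq_bigr => p _; rewrite !mulrA.
- exists [seq (p.1, p.2 * r) | p <- s]; rewrite big_map mulr_suml.
  by apply: eq_bigr => p _; rewrite !mulrA.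
Qed.

Lemma RuR_sub {M u} : ideal M -> M u -> RuR u `<=` M.
Proof.
move=> HM Mu _ [s ->]; apply: (big_ind M) => [|x y|p _]; first exact: left_ideal0 HM.1.
  exact: (left_idealD HM.1).
by apply: (idealMr HM); apply: (idealMl HM).
Qed.

Lemma fullP u : full u <-> forall M, maximal_ideal M -> ~ M u.
Proof.
split=> [fu M [HM [Mpr _]] Mu|noM x].
  by case/(left_ideal_proper HM.1): Mpr; apply: (RuR_sub HM Mu).
have [RuR1|nRuR1] := pselect (RuR u 1).
  by rewrite -[x]mul1r; apply: idealMr (ideal_RuR u) RuR1.
have [M maxM RuRM] := ex_maximal_ideal (ideal_RuR u) nRuR1.
by case: (noM M maxM); apply: RuRM; exists [:: (1, 1)]; rewrite big_seq1 mul1r mulr1.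
Qed.

End Full.

Section Separation.
Context {R : pzRingType}.
Implicit Types (a e g h : R) (M N P : set R).

Lemma maximal_ideals_comaximal {M N} : maximal_ideal M -> maximal_ideal N ->
  ~ (forall x, M x <-> N x) -> [set m + n | m in M & n in N] 1.
Proof.
move=> maxM maxN MN; have [HM [Mpr _]] := maxM; have [HN _] := maxN.
have MK : M `<=` [set m + n | m in M & n in N].
  by move=> m Mm; exists m => //; exists 0; [exact: left_ideal0 HN.1|rewrite addr0].
have [//|KM] := maximal_idealP maxM (ideal_add HM HN) MK.
have NM : N `<=` M.
  by move=> n Nn; apply: KM; exists 0; [exact: left_ideal0 HM.1|exists n; rewrite ?add0r].
have [M1|MN'] := maximal_idealP maxN HM NM.
  by case/(left_ideal_proper HM.1): Mpr.
by case: MN => x; split; [apply: MN'|apply: NM].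
Qed.

Lemma maximal_ideal_cover (F : set R) a :
  F 0 -> F `<=` @eR1e_in_J R -> (forall g h, F g -> F h -> F (ejoin g h)) ->
  (forall P, maximal_ideal P -> P a -> exists2 g, F g & P (1 - g)) ->
  exists2 g, F g & forall P, maximal_ideal P -> P a -> P (1 - g).
Proof.
move=> F0 FJ Fjoin cover.
pose S := [set z | exists2 h, F h & forall P, maximal_ideal P -> P a -> P h -> P z].
have HS : ideal S.
  apply: ideal_intro => [|x y [g Fg Vg] [h Fh Vh]|r x [h Fh Vh]|x r [h Fh Vh]].
  - by exists 0 => // P [HP _] _ _; apply: left_ideal0 HP.1.
  - exists (ejoin g h); first exact: Fjoin.
    move=> P maxP Pa /(maximal_ideal_ejoin maxP (FJ _ Fg) (FJ _ Fh)) [Pg Ph].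
    exact: (left_idealD maxP.1.1 (Vg P maxP Pa Pg) (Vh P maxP Pa Ph)).
  - by exists h => // P maxP Pa Ph; apply: (idealMl maxP.1); apply: Vh.
  - by exists h => // P maxP Pa Ph; apply: (idealMr maxP.1); apply: Vh.
have [h Fh Vh] : S 1.
  apply: contrapT => nS1; have [P maxP SP] := ex_maximal_ideal HS nS1.
  have Pa : P a by apply: SP; exists 0.
  have [g Fg P1g] := cover P maxP Pa.
  have Pg : P g by apply: SP; exists g.
  exact: (left_ideal_compl maxP.1.1 maxP.2.1 Pg P1g).
exists h => // P maxP Pa; have [Ph|//] := maximal_ideal_split maxP (FJ _ Fh).
by case/(left_ideal_proper maxP.1.1): maxP.2.1; apply: Vh.
Qed.

Hypothesis separating : forall M N : R -> Prop,
  maximal_ideal M -> maximal_ideal N -> ~ (forall x, M x <-> N x) ->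
  exists e : R, M e /\ N (1 - e) /\ eR1e_in_J e.

Lemma separate_point_closed {N a} : maximal_ideal N -> N (1 - a) ->
  exists2 h, eR1e_in_J h /\ N h & forall P, maximal_ideal P -> P a -> P (1 - h).
Proof.
move=> maxN N1a; apply: maximal_ideal_cover => [|h []//|g h [Jg Ng] [Jh Nh]|P maxP Pa].
- by split; [exact: eR1e_in_J0|exact: left_ideal0 maxN.1.1].
- by split; [exact: eR1e_in_J_join|apply/(maximal_ideal_ejoin maxN Jg Jh)].
have NP : ~ (forall x, N x <-> P x).
  by move=> NP; apply: (left_ideal_compl maxP.1.1 maxP.2.1 Pa); apply/NP.
by have [e [Ne [P1e Je]]] := separating _ _ maxN maxP NP; exists e.
Qed.

Lemma separate_closed_closed a : exists2 e, eR1e_in_J e &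
  (forall P, maximal_ideal P -> P a -> P (1 - e)) /\
  (forall P, maximal_ideal P -> P (1 - a) -> P e).
Proof.
pose F := [set g | eR1e_in_J g /\ forall P, maximal_ideal P -> P a -> P g].
have [|g []//|g h [Jg Vg] [Jh Vh]|P maxP P1a|g [Jg Vg] V1g] :=
  @maximal_ideal_cover F (1 - a).
- by split=> [|P maxP _]; [exact: eR1e_in_J0|exact: left_ideal0 maxP.1.1].
- split=> [|P maxP Pa]; first exact: eR1e_in_J_join.
  by apply/(maximal_ideal_ejoin maxP Jg Jh); split; [apply: Vg|apply: Vh].
- have [h [Jh Ph] Vh] := separate_point_closed maxP P1a.
  by exists (1 - h); [split=> //; exact: eR1e_in_J_compl|rewrite subKr].
by exists (1 - g); [exact: eR1e_in_J_compl|rewrite subKr].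
Qed.

Lemma feckly_clean_of_separating : feckly_clean R.
Proof.
move=> a; have [e Je [Va V1a]] := separate_closed_closed a.
exists e, (a - e); split; first by rewrite addrC subrK.
split=> //; apply/fullP => P maxP Pu; have [HP [Ppr _]] := maxP.
have [Pe|P1e] := maximal_ideal_split maxP Je.
  apply: (left_ideal_compl HP.1 Ppr Pe); apply: Va => //.
  by rewrite -(subrK e a); apply: (left_idealD HP.1 Pu Pe).
apply: (left_ideal_compl HP.1 Ppr _ P1e); apply: V1a => //.
have -> : 1 - a = (1 - e) - (a - e) by rewrite opprB addrA subrK.
exact: (left_idealB HP.1 P1e Pu).
Qed.

End Separation.

Lemma separating_of_feckly_clean (R : pzRingType) : feckly_clean R ->
  forall M N : R -> Prop, maximal_ideal M -> maximal_ideal N ->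
  ~ (forall x, M x <-> N x) -> exists e : R, M e /\ N (1 - e) /\ eR1e_in_J e.
Proof.
move=> fc M N maxM maxN MN; have [HM _] := maxM; have [HN _] := maxN.
have [m Mm [n Nn def1]] := maximal_ideals_comaximal maxM maxN MN.
have [e [u [def_n [/fullP noMu Je]]]] := fc n.
exists e; split; last split => //.
  have [//|M1e] := maximal_ideal_split maxM Je; case: (noMu M maxM).
  have -> : u = (1 - e) - m.
    by rewrite -def1 def_n [m + _]addrC addrAC addrK [e + u]addrC addrK.
  exact: (left_idealB HM.1 M1e Mm).
have [Ne|//] := maximal_ideal_split maxN Je; case: (noMu N maxN).
have -> : u = n - e by rewrite def_n addrC addKr.
exact: (left_idealB HN.1 Nn Ne).
Qed.

Theorem theorem2p6 (R : pzRingType) :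
  feckly_clean R <->
  (forall M N : R -> Prop, maximal_ideal M -> maximal_ideal N -> ~ (forall x, M x <-> N x) ->
     exists e : R, M e /\ N (1 - e) /\ eR1e_in_J e).
Proof.
split; first exact: separating_of_feckly_clean.
exact: feckly_clean_of_separating.
Qed.
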